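(* Let $x\in\mathrm{GF}(2^7)$ be such that the eight elements $0,1,x,x^3,x^7,x^{15},x^{31},x^{63}$ are pairwise distinct. Then the set $\{0,1,x,x^3,x^7,x^{15},x^{31},x^{63}\}$ is a subgroup of the additive group of $\mathrm{GF}(2^7)$ if and only if either $1+x=x^7$ or $1+x^3=x^7$. *)

From mathcomp Require Import all_boot all_order all_algebra all_field.
Set Implicit Arguments. Unset Strict Implicit. Unset Printing Implicit Defensive.
Import GRing.Theory.
Local Open Scope ring_scope.

Definition Sx (F : finFieldType) (x : F) : seq F :=
  [:: 0; 1; x; x ^+ 3; x ^+ 7; x ^+ 15; x ^+ 31; x ^+ 63].

Definition is_add_subgroup (F : finFieldType) (s : seq F) : Prop :=
  GRing.zmod_closed (fun y : F => y \in s).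

From mathcomp Require Import all_boot all_order all_algebra all_field zify.
Set Implicit Arguments.
Unset Strict Implicit.
Unset Printing Implicit Defensive.

(* Write e_i = x^(2^i - 1).  In characteristic 2 the map y |-> x y^2 is
   additive and sends e_i to e_(i+1); as x^(2^7 - 1) = 1, indices live modulo 7
   and every relation e_i + e_j = e_l can be rotated to e_(i+k) + e_(j+k) =
   e_(l+k).  Rotating also reduces the closure of {0, e_0, ..., e_6} under
   addition to the seven sums 1 + e_i.  If the set is a group it contains
   1 - x = 1 + x, which is then some e_m (not 0, as x <> 1); rotating this
   relation makes two distinct e_i coincide unless m = 3 or m = 5, which give
   the two relations of the statement.  Conversely, either relation rotates
   into the seven lines of a Fano plane on e_0, ..., e_6, and these lines
   contain every sum 1 + e_i. *)

Import GRing.Theory.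
Local Open Scope ring_scope.

Definition mersenne_pow (R : pzSemiRingType) (x : R) (i : nat) : R :=
  x ^+ (2 ^ i).-1.

Definition mersenne_set (R : pzSemiRingType) (x : R) (n : nat) : seq R :=
  0 :: mkseq (mersenne_pow x) n.

Definition twist (R : pzSemiRingType) (x y : R) : R := x * y ^+ 2.

Section Char2Triples.
Variable R : nzRingType.
Hypothesis char2 : (2 \in [pchar R])%N.

Lemma addr_pchar2_swap (a b c : R) : a + b = c -> a + c = b.
Proof. by move=> <-; rewrite (addKr_pchar2 char2). Qed.

Lemma addr_pchar2_rot (a b c : R) : a + b = c -> c + a = b.
Proof. by move=> /addr_pchar2_swap; rewrite addrC. Qed.

End Char2Triples.

Section Mersenne.
Variables (R : comNzRingType) (x : R).
Local Notation e i := (mersenne_pow x i%N).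
Local Notation tw := (twist x).

Lemma mersenne_pow0 : e 0 = 1.
Proof. by []. Qed.

Lemma iter_twist0 k : iter k tw 0 = 0.
Proof. by elim: k => //= k ->; rewrite /twist expr0n mulr0. Qed.

Lemma twist_mersenne_pow i : tw (e i) = e i.+1.
Proof.
rewrite /twist /mersenne_pow -exprM -exprS; congr (_ ^+ _).
by rewrite expnS; have := expn_gt0 2 i; lia.
Qed.

Lemma iter_twist_mersenne_pow k i : iter k tw (e i) = e (i + k).
Proof. by elim: k => [|k /= ->]; rewrite ?addn0 ?addnS ?twist_mersenne_pow. Qed.

Variable n : nat.
Local Notation S := (mersenne_set x n).

Lemma mersenne_setP y :
  reflect (y = 0 \/ exists2 i, (i < n)%N & y = e i) (y \in S).
Proof.
apply: (iffP predU1P) => -[-> | ]; [by left | | by left |].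
  by case/mapP=> i; rewrite mem_iota => /andP[_ lt_in] ->; right; exists i.
by case=> i lt_in ->; right; apply: map_f; rewrite mem_iota.
Qed.

Hypothesis x_order : e n = 1.

Lemma mersenne_powDn i : e (i + n) = e i.
Proof.
rewrite /mersenne_pow.
have -> : (2 ^ (i + n)).-1 = ((2 ^ n).-1 * 2 ^ i + (2 ^ i).-1)%N.
  by rewrite expnD; have := expn_gt0 2 i; have := expn_gt0 2 n; nia.
by move: x_order; rewrite /mersenne_pow exprD exprM => ->; rewrite expr1n mul1r.
Qed.

Lemma mersenne_pow_modn i : e (i %% n) = e i.
Proof.
rewrite {2}(divn_eq i n) addnC.
elim: (i %/ n)%N => [|q IH]; first by rewrite addn0.
by rewrite mulSnr addnA mersenne_powDn.
Qed.

Hypothesis n_gt0 : (0 < n)%N.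

Lemma mem_mersenne_pow i : e i \in S.
Proof.
rewrite -mersenne_pow_modn; apply/mersenne_setP; right.
by exists (i %% n)%N; rewrite ?ltn_pmod.
Qed.

Lemma iter_twist_mersenne_set k y : y \in S -> iter k tw y \in S.
Proof.
by case/mersenne_setP=> [-> | [i _ ->]];
  rewrite ?iter_twist0 ?mem_head ?iter_twist_mersenne_pow ?mem_mersenne_pow.
Qed.

Lemma mersenne_set_iter_twist_onto k y : (k <= n)%N -> y \in S ->
  exists2 w, w \in S & iter k tw w = y.
Proof.
move=> le_kn /mersenne_setP[-> | [i _ ->]].
  by exists 0; rewrite ?mem_head ?iter_twist0.
exists (e (i + (n - k))%N); first exact: mem_mersenne_pow.
by rewrite iter_twist_mersenne_pow -addnA subnK // mersenne_powDn.
Qed.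

Hypothesis char2 : (2 \in [pchar R])%N.

Lemma twistD a b : tw (a + b) = tw a + tw b.
Proof. by rewrite /twist -!(pFrobenius_autE char2) rmorphD mulrDr. Qed.

Lemma iter_twistD k a b : iter k tw (a + b) = iter k tw a + iter k tw b.
Proof. by elim: k => //= k ->; rewrite twistD. Qed.

Lemma mersenne_powD_rotate i j l k : e i + e j = e l ->
  e ((i + k) %% n) + e ((j + k) %% n) = e ((l + k) %% n).
Proof.
by rewrite !mersenne_pow_modn -!iter_twist_mersenne_pow -iter_twistD => ->.
Qed.

Lemma mersenne_set_zmod_closed :
  (forall i, (0 < i < n)%N -> exists j, 1 + e i = e j) ->
  GRing.zmod_closed (fun y => y \in S).
Proof.
move=> one_add_e.
have one_add y : y \in S -> 1 + y \in S.
  case/mersenne_setP=> [-> | [[|i] lt_in ->]].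
  - by rewrite addr0 -mersenne_pow0 mem_mersenne_pow.
  - by rewrite mersenne_pow0 (addrr_pchar2 char2) mem_head.
  - by have [j ->] := one_add_e i.+1 lt_in; apply: mem_mersenne_pow.
split=> [|u v /mersenne_setP[-> | [i lt_in ->]] vS]; first exact: mem_head.
  by rewrite sub0r (oppr_pchar2 char2).
have [w wS <-] := mersenne_set_iter_twist_onto (ltnW lt_in) vS.
rewrite (oppr_pchar2 char2) -{1}(add0n i) -iter_twist_mersenne_pow -iter_twistD.
exact/iter_twist_mersenne_set/one_add.
Qed.

End Mersenne.

Section Mersenne7.
Variables (R : comNzRingType) (x : R).
Hypotheses (x_order : mersenne_pow x 7 = 1) (char2 : (2 \in [pchar R])%N).
Local Notation e i := (mersenne_pow x i%N).
Local Notation S := (mersenne_set x 7).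
Local Notation rot := (mersenne_powD_rotate x_order char2).

Lemma mersenne7_one_add : e 0 + e 1 = e 3 \/ e 0 + e 2 = e 3 ->
  forall i, (0 < i < 7)%N -> exists j, 1 + e i = e j.
Proof.
have swap a b : 1 + e a = e b -> 1 + e b = e a by exact: addr_pchar2_swap.
move=> rel i /andP[i_gt0 i_lt7]; case: rel => rel.
- have h4 : 1 + e 4 = e 5 := addr_pchar2_rot char2 (rot 4 rel).
  have h6 : 1 + e 6 = e 2 by rewrite addrC (rot 6 rel).
  by case: i i_gt0 i_lt7 => [|[|[|[|[|[|[|i]]]]]]] // _ _; eexists;
    first [eassumption | apply: swap; eassumption].
- have h4 : 1 + e 4 = e 6 := addr_pchar2_rot char2 (rot 4 rel).
  have h5 : 1 + e 5 = e 1 by rewrite addrC (rot 5 rel).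
  by case: i i_gt0 i_lt7 => [|[|[|[|[|[|[|i]]]]]]] // _ _; eexists;
    first [eassumption | apply: swap; eassumption].
Qed.

Lemma mersenne7_relation : uniq S -> 1 + e 1 \in S ->
  e 0 + e 1 = e 3 \/ e 0 + e 2 = e 3.
Proof.
rewrite /mersenne_set cons_uniq => /andP[zero_notin /mkseq_uniqP e_inj].
have e_neq i j : (i < 7)%N -> (j < 7)%N -> i != j -> e i != e j.
  by move=> lt_i7 lt_j7; apply: contraNneq => /(e_inj i j lt_i7 lt_j7) ->.
have e_neq0 i : (i < 7)%N -> e i != 0.
  by move=> lt_i7; apply: contraNneq zero_notin => <-; rewrite map_f ?mem_iota.
rewrite -(mersenne_pow0 x); case/mersenne_setP=> [h | [m lt_m7 h]].
  move: (e_neq 0 1 isT isT isT).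
  by rewrite -(addr_pchar2_rot char2 h) add0r eqxx.
case: m lt_m7 h => [|[|[|[|[|[|[|m]]]]]]] // _ h; [| | | by left | | right | ].
- move: (e_neq0 1 isT).
  by rewrite -(addr_pchar2_swap char2 h) (addrr_pchar2 char2) eqxx.
- by rewrite -[e 1 in RHS]add0r in h; move/addIr/eqP: h; rewrite oner_eq0.
- have h1 : e 1 + e 2 = e 3 := rot 1 h.
  move: (e_neq 0 3 isT isT isT).
  by rewrite -h1 -h addrCA (addrr_pchar2 char2) addr0 eqxx.
- have h3 : e 0 + e 3 = e 4 := addr_pchar2_rot char2 (rot 3 h).
  move: (e_neq 3 1 isT isT isT); rewrite -(addr_pchar2_swap char2 h3).
  by rewrite (addr_pchar2_swap char2 h) eqxx.
- have h2 : e 2 + e 3 = e 0 := rot 2 h.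
  exact: (addr_pchar2_rot char2 h2).
- have h6 : e 6 + e 0 = e 5 := rot 6 h.
  move: (e_neq 5 1 isT isT isT).
  by rewrite -h6 -h addrAC (addrr_pchar2 char2) add0r eqxx.
Qed.

End Mersenne7.

Theorem lemma6 (F : finFieldType) (hF : #|F| = (2 ^ 7)%N) (x : F)
  (hdist : uniq (Sx x)) :
  is_add_subgroup (Sx x) <-> (1 + x = x ^+ 7 \/ 1 + x ^+ 3 = x ^+ 7).
Proof.
have char2 : (2 \in [pchar F])%N := card_finPcharP hF (isT : prime 2).
have x_neq0 : x != 0.
  by apply: contraTneq hdist => ->; rewrite /Sx /= !inE eqxx !orbT.
have x_order : mersenne_pow x 7 = 1.
  apply: (mulfI x_neq0); rewrite mulr1 /mersenne_pow -exprS prednK ?expn_gt0 //.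
  by rewrite -hF expf_card.
have S_eq : Sx x = mersenne_set x 7 by [].
rewrite /is_add_subgroup S_eq in hdist *.
change (GRing.zmod_closed (fun y => y \in mersenne_set x 7) <->
  mersenne_pow x 0 + mersenne_pow x 1 = mersenne_pow x 3 \/
  mersenne_pow x 0 + mersenne_pow x 2 = mersenne_pow x 3).
split=> [[_ closed] | rel].
  apply: mersenne7_relation => //.
  rewrite -(oppr_pchar2 char2 (mersenne_pow x 1)).
  by apply: closed; rewrite -?(mersenne_pow0 x) mem_mersenne_pow.
exact/(mersenne_set_zmod_closed x_order _ char2)/mersenne7_one_add.
Qed.
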